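(* An operator $\Lambda$ satisfies balanced treatment and non-arbitrariness if and only if $\Lambda$ is the historical operator $\Phi$, i.e., for every standard rule $R$, every historical claims problem $(N,c,E,h)$ and every $i\in N$, $$\Lambda_i(R)(N,c,E,h)=\min\{c_i,R_i(N,\widetilde{c},E)+\lambda\},$$ where $\lambda\in\mathbb{R}_+$ is such that $\sum_{i\in N}\min\{c_i,R_i(N,\widetilde{c},E)+\lambda\}=E$.
   Context: Agents are elements of $\mathbb{N}$; $N$ denotes a nonempty finite subset of $\mathbb{N}$. A (standard) claims problem is a triple $(N,c,E)$ with $c\in\mathbb{R}_+^N$, $E\in\mathbb{R}_+$, $C=\sum_{i\in N}c_i>0$ and $E\le C$. An allocation for it is $x\in\mathbb{R}^N$ with $0\le x_i\le c_i$ for all $i$ and $\sum_ix_i=E$. A standard rule $R$ assigns to each standard claims problem an allocation $R(N,c,E)$; $\mathcal{R}$ is the set of standard rules. A history for $N$ is a finite sequence $h=\{(c^{(t)},x^{(t)})\}_{t=1}^{|T|}$ where for each $t$, $c^{(t)}\in\mathbb{R}_+^N$ and $x^{(t)}$ is an allocation of $(N,c^{(t)},\sum_ix^{(t)}_i)$. A historical claims problem is $(N,c,E,h)$ with $(N,c,E)$ a standard claims problem and $h$ a history for $N$; its allocations are the allocations of $(N,c,E)$. A general rule assigns to each historical claims problem an allocation. An operator $\Lambda$ assigns to each standard rule $R$ a general rule $\Lambda(R)$. The history-adjusted claims are $\widetilde{c}_i=c_i+\sum_t(c^{(t)}_i-x^{(t)}_i)$. (A $\lambda\ge0$ as in the claim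 always exists, and the resulting vector does not depend on which such $\lambda$ is chosen, so the historical operator $\Phi$ is well defined.) Axioms on operators (required for every $R\in\mathcal{R}$ and every historical problem $(N,c,E,h)$): Balanced treatment: for each $i,j\in N$ with $\Lambda_i(R)(N,c,E,h)<c_i$ and $\Lambda_j(R)(N,c,E,h)<c_j$, $\Lambda_i(R)(N,c,E,h)-R_i(N,\widetilde{c},E)=\Lambda_j(R)(N,c,E,h)-R_j(N,\widetilde{c},E)$. Non-arbitrariness: for each $i\in N$ with $\Lambda_i(R)(N,c,E,h)=c_i$ and $R_i(N,\widetilde{c},E)<c_i$, we have $\Lambda_i(R)(N,c,E,h)-R_i(N,\widetilde{c},E)\le\Lambda_j(R)(N,c,E,h)-R_j(N,\widetilde{c},E)$ for all $j\in N$ with $\Lambda_j(R)(N,c,E,h)<c_j$. *)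

From HB Require Import structures.
From mathcomp Require Import all_boot all_order all_algebra.
From mathcomp Require Import finmap.
From mathcomp Require Import reals.
Set Implicit Arguments. Unset Strict Implicit. Unset Printing Implicit Defensive.
Import Order.TTheory GRing.Theory Num.Theory.
Local Open Scope ring_scope.

Section ClaimsDefs.
Variable R : realType.

Definition vec (N : {fset nat}) := {ffun N -> R}.

Definition total (N : {fset nat}) (v : vec N) : R := \sum_(i : N) v i.

Definition is_problem (N : {fset nat}) (c : vec N) (E : R) : Prop :=
  N != fset0 /\ (forall i, 0 <= c i) /\ 0 <= E /\ 0 < total c /\ E <= total c.

Definition is_allocation (N : {fset nat}) (c : vec N) (E : R) (x : vec N) : Prop :=
  (forall i, 0 <= x i /\ x i <= c i) /\ total x = E.

Definition history (N : {fset nat}) := seq (vec N * vec N).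

(* h is a history for N: each period (c^t, x^t) has c^t ≥ 0 and x^t an
   allocation of the claims problem (N, c^t, Σ x^t) *)
Definition is_history (N : {fset nat}) (h : history N) : Prop :=
  forall p, p \in h -> is_problem p.1 (total p.2) /\ is_allocation p.1 (total p.2) p.2.

Definition is_hproblem (N : {fset nat}) (c : vec N) (E : R) (h : history N) : Prop :=
  is_problem c E /\ is_history h.

Definition adj_claims (N : {fset nat}) (c : vec N) (h : history N) : vec N :=
  [ffun i => c i + \sum_(p <- h) (p.1 i - p.2 i)].

Definition std_rule_fun := forall N : {fset nat}, vec N -> R -> vec N.
Definition gen_rule_fun := forall N : {fset nat}, vec N -> R -> history N -> vec N.

Definition is_std_rule (Rl : std_rule_fun) : Prop :=
  forall N (c : vec N) E, is_problem c E -> is_allocation c E (Rl N c E).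

Definition is_gen_rule (G : gen_rule_fun) : Prop :=
  forall N (c : vec N) E (h : history N), is_hproblem c E h ->
    is_allocation c E (G N c E h).

Definition operator := std_rule_fun -> gen_rule_fun.

Definition is_operator (L : operator) : Prop :=
  forall Rl, is_std_rule Rl -> is_gen_rule (L Rl).

Definition balanced_treatment (L : operator) : Prop :=
  forall Rl, is_std_rule Rl ->
  forall N (c : vec N) E (h : history N), is_hproblem c E h ->
  let x := L Rl N c E h in
  let r := Rl N (adj_claims c h) E in
  forall i j, x i < c i -> x j < c j -> x i - r i = x j - r j.

Definition non_arbitrariness (L : operator) : Prop :=
  forall Rl, is_std_rule Rl ->
  forall N (c : vec N) E (h : history N), is_hproblem c E h ->
  let x := L Rl N c E h in
  let r := Rl N (adj_claims c h) E in
  forall i, x i = c i -> r i < c i ->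
  forall j, x j < c j -> x i - r i <= x j - r j.

Definition is_historical_operator (L : operator) : Prop :=
  forall Rl, is_std_rule Rl ->
  forall N (c : vec N) E (h : history N), is_hproblem c E h ->
  let r := Rl N (adj_claims c h) E in
  exists lam : R, 0 <= lam /\
    \sum_(i : N) Num.min (c i) (r i + lam) = E /\
    forall i, L Rl N c E h i = Num.min (c i) (r i + lam).

End ClaimsDefs.

From Pilot Require Import Defs.
From HB Require Import structures.
From mathcomp Require Import all_boot all_order all_algebra.
From mathcomp Require Import finmap.
From mathcomp Require Import reals.
From mathcomp Require Import lra.
Import Order.TTheory GRing.Theory Num.Theory.
Local Open Scope ring_scope.

(** Both axioms only constrain the gains [x i - r i] of the allocation [x] over
    the rule's allocation [r] for the history-adjusted claims: all unsaturated
    agents ([x i < c i]) share a common gain [lam], and a saturated agent gains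
    at most [lam], or at most nothing when [c i <= r i].  Hence
    [x i = min (c i) (r i + lam)].  As [x] and [r] distribute the same estate,
    [lam] cannot be negative: otherwise nobody would gain and the unsaturated
    agents would lose.  If no agent is unsaturated, [x = c] and any large
    enough [lam] works. *)

Section TruncatedShift.
Context {R : realDomainType} {I : finType} {c r x : I -> R}.

Definition balanced_gains :=
  forall i j, x i < c i -> x j < c j -> x i - r i = x j - r j.

Definition nonarbitrary_gains :=
  forall i, x i = c i -> r i < c i ->
  forall j, x j < c j -> x i - r i <= x j - r j.

Definition truncated_shift (lam : R) := forall i, x i = Num.min (c i) (r i + lam).

Lemma truncated_shift_balanced lam : truncated_shift lam -> balanced_gains.
Proof.
move=> x_eq i j; rewrite !x_eq !gt_min !ltxx /= => ci cj.
by rewrite (min_r (ltW ci)) (min_r (ltW cj)); lra.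
Qed.

Lemma truncated_shift_nonarbitrary lam : truncated_shift lam -> nonarbitrary_gains.
Proof.
move=> x_eq i xi _ j; rewrite x_eq in xi; move/eqP: xi; rewrite eq_minl => ci.
rewrite !x_eq gt_min ltxx /= => cj; rewrite (min_l ci) (min_r (ltW cj)); lra.
Qed.

Hypotheses (x_le_c : forall i, x i <= c i) (sum_x_r : \sum_i x i = \sum_i r i).
Hypotheses (balanced : balanced_gains) (nonarbitrary : nonarbitrary_gains).

Lemma gain_le_unsaturated j : x j < c j ->
  forall i, x i - r i <= Num.max (x j - r j) 0.
Proof.
move=> xj i; have [xi | ci] := ltP (x i) (c i).
  by rewrite (balanced i j xi xj) le_max lexx.
have xi : x i = c i by apply/le_anti; rewrite x_le_c ci.
have [rci | cri] := ltP (r i) (c i).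
  by rewrite le_max (nonarbitrary i xi rci j xj).
by rewrite le_max subr_le0 xi cri orbT.
Qed.

Lemma unsaturated_gain_ge0 j : x j < c j -> 0 <= x j - r j.
Proof.
move=> xj; rewrite leNgt; apply/negP => gain_lt0.
have rest_le0 : \sum_(i | i != j) (x i - r i) <= 0.
  apply: sumr_le0 => i _.
  by rewrite -(max_r (ltW gain_lt0)); exact: gain_le_unsaturated.
have : \sum_i (x i - r i) < 0 by rewrite (bigD1 j) //=; lra.
by rewrite sumrB sum_x_r subrr ltxx.
Qed.

Lemma truncated_shift_unsaturated j : x j < c j -> truncated_shift (x j - r j).
Proof.
move=> xj i; have [xi | ci] := ltP (x i) (c i).
  by rewrite -(balanced i j xi xj) subrKC (min_r (ltW xi)).
have xi : x i = c i by apply/le_anti; rewrite x_le_c ci.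
rewrite xi min_l //; have := gain_le_unsaturated j xj i.
by rewrite xi (max_l (unsaturated_gain_ge0 j xj)); lra.
Qed.

Lemma truncated_shift_saturated :
  (forall i, x i = c i) -> truncated_shift (\sum_i `|c i - r i|).
Proof.
move=> xc i; rewrite xc min_l // -lerBlDl.
apply: le_trans (ler_norm _) _; rewrite (bigD1 i) //= lerDl.
by apply: sumr_ge0 => k _; exact: normr_ge0.
Qed.

Lemma exists_truncated_shift : exists2 lam, 0 <= lam & truncated_shift lam.
Proof.
have [j xj | sat] := pickP (fun j => x j < c j).
  exists (x j - r j); [exact: unsaturated_gain_ge0 | exact: truncated_shift_unsaturated].
have xc i : x i = c i by apply/le_anti; rewrite x_le_c leNgt sat.
exists (\sum_i `|c i - r i|); last exact: truncated_shift_saturated.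
by apply: sumr_ge0 => k _; exact: normr_ge0.
Qed.

End TruncatedShift.

Lemma le_adj_claims {R : realType} {N : {fset nat}} (c : vec R N) (h : history R N) :
  is_history h -> forall i, c i <= adj_claims c h i.
Proof.
move=> hist i; rewrite ffunE lerDl big_seq sumr_ge0 // => p.
by move=> /hist[_ [/(_ i)[_ x_le_c] _]]; rewrite subr_ge0.
Qed.

Lemma adj_claims_problem {R : realType} {N : {fset nat}} {c : vec R N} {E : R}
    {h : history R N} :
  is_hproblem c E h -> is_problem (adj_claims c h) E.
Proof.
move=> [[N0 [c_ge0 [E_ge0 [tc_gt0 E_le]]]] /le_adj_claims adj_ge].
have tc_le : Defs.total c <= Defs.total (adj_claims c h) by apply: ler_sum.
do !split=> //.
- by move=> i; apply: le_trans (adj_ge c i).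
- exact: lt_le_trans tc_le.
- exact: le_trans tc_le.
Qed.

Theorem theorem3 (R : realType) (L : operator R) (HL : is_operator L) :
  (balanced_treatment L /\ non_arbitrariness L) <-> is_historical_operator L.
Proof.
split=> [[BT NA] | Phi].
- move=> Rl HR N c E h hp /=.
  set x := L Rl N c E h; set r := Rl N (adj_claims c h) E.
  have [x_alloc sum_x] : is_allocation c E x := HL Rl HR N c E h hp.
  have [_ sum_r] : is_allocation (adj_claims c h) E r :=
    HR _ _ _ (adj_claims_problem hp).
  have [lam lam_ge0 x_eq] := exists_truncated_shift
    (fun i => (x_alloc i).2) (etrans sum_x (esym sum_r))
    (BT Rl HR N c E h hp) (NA Rl HR N c E h hp).
  exists lam; split=> //; split=> //.
  by rewrite -sum_x; apply: eq_bigr => i _; rewrite x_eq.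
- split=> Rl HR N c E h hp; have [lam [_ [_ x_eq]]] := Phi Rl HR N c E h hp.
  + exact: truncated_shift_balanced x_eq.
  + exact: truncated_shift_nonarbitrary x_eq.
Qed.
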